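(* For every main stack $S$, every expression $e$, every expression context $C[\cdot]$, and all finite sequences of (non-holed) expressions $E_1,E_2,E'$: if $r(S\ \ E_1.C[e].E_2)=E'$, then there exist sequences $E'_1,E'_2$ and a context $C'[\cdot]$ with $E'=E'_1.C'[e].E'_2$.
   Context: Expressions: $e ::= x_h \mid c_h \mid [\mathrm{let}_h\,x_1\dots x_n \text{ be } e \text{ in } e] \mid [\mathrm{call}_h\,f\ e_1\dots e_n] \mid [\mathrm{primitive}_h\,\pi\ e_1\dots e_n] \mid [\mathrm{if}_h\,e\in\{c_1,\dots,c_n\}\text{ then } e \text{ else } e] \mid [\mathrm{fork}_h\,f\ e_1\dots e_n] \mid [\mathrm{join}_h\,e] \mid [\mathrm{bundle}_h\,e_1\dots e_n]$, over variables $x$, values $c$, procedure names $f$, primitive names $\pi$ and handles $h$. Holed expressions additionally include $[\mathrm{let}_h\,x_1..x_n\text{ be }\Box\text{ in }e]$, $[\mathrm{call}_h f\,\Box]$, $[\mathrm{primitive}_h\pi\,\Box]$, $[\mathrm{if}_h\Box\in\{c_1..c_n\}\text{ then }e\text{ else }e']$, $[\mathrm{bundle}_h\Box]$, $[\mathrm{fork}_h f\,\Box]$, $[\mathrm{join}_h\Box]$. A main stack is a finite sequence of pairs (holed expression, local environment $\rho$), written top-first with dots; sequences of expressions are likewise written with dots, and $C[\cdot]$ denotes an expression with one hole in a subexpression position. Resynthesization $r(S\ E)$ (with all primed handles on the right-hand sides fresh, and the choice of handles considered immaterial) is defined by: $r(\langle\rangle\ E)=E$; $r((e,\rho).S\ E)=r(S\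 e.E)$ for non-holed $e$; $r(([\mathrm{let}_{h_0}x_1..x_n\text{ be }\Box\text{ in }e_2],\rho).S\ a.E)=r(([\mathrm{let}_{h'_0}x_1..x_n\text{ be }a\text{ in }e_2],\rho).S\ E)$; $r(([\mathrm{call}_{h_0}f\,\Box],\rho).S\ a_n a_{n-1}\cdots a_1.E)=r(([\mathrm{call}_{h'_0}f\,a_1..a_n],\rho).S\ E)$; $r(([\mathrm{primitive}_{h_0}\pi\,\Box],\rho).S\ a_n\cdots a_1.E)=r(([\mathrm{primitive}_{h'_0}\pi\,a_1..a_n],\rho).S\ E)$; $r(([\mathrm{if}_{h_0}\Box\in\{c_1..c_n\}\text{ then }e_2\text{ else }e_3],\rho).S\ a.E)=r(([\mathrm{if}_{h'_0}a\in\{c_1..c_n\}\text{ then }e_2\text{ else }e_3],\rho).S\ E)$; $r(([\mathrm{bundle}_{h_0}\Box],\rho).S\ a_n\cdots a_1.E)=r(([\mathrm{bundle}_{h'_0}a_1..a_n],\rho).S\ E)$; $r(([\mathrm{fork}_{h_0}f\,\Box],\rho).S\ a_n\cdots a_1.E)=r(([\mathrm{fork}_{h'_0}f\,a_1..a_n],\rho).S\ E)$; $r(([\mathrm{join}_{h_0}\Box],\rho).S\ a.E)=r(([\mathrm{join}_{h'_0}a],\rho).S\ E)$. *)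

From Stdlib Require Import List.
Import ListNotations.
Set Implicit Arguments.

Section Syntax.
(* Hd: handles, Var: variables, Val: values, Proc: procedure names,
   Prim: primitive names, Env: local environments rho. *)
Context (Hd Var Val Proc Prim Env : Type).

Inductive expr : Type :=
| EVar    : Hd -> Var -> expr
| EVal    : Hd -> Val -> expr
| ELet    : Hd -> list Var -> expr -> expr -> expr
| ECall   : Hd -> Proc -> list expr -> expr
| EPrim   : Hd -> Prim -> list expr -> expr
| EIf     : Hd -> expr -> list Val -> expr -> expr -> expr
| EFork   : Hd -> Proc -> list expr -> expr
| EJoin   : Hd -> expr -> expr
| EBundle : Hd -> list expr -> expr.

Inductive hexpr : Type :=
| HExpr   : expr -> hexpr
| HLet    : Hd -> list Var -> expr -> hexpr
| HCall   : Hd -> Proc -> hexpr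
| HPrim   : Hd -> Prim -> hexpr
| HIf     : Hd -> list Val -> expr -> expr -> hexpr
| HBundle : Hd -> hexpr
| HFork   : Hd -> Proc -> hexpr
| HJoin   : Hd -> hexpr.

(* Main stack, top first. *)
Definition stack := list (hexpr * Env).

Inductive ctx : Type :=
| CHole   : ctx
| CLet1   : Hd -> list Var -> ctx -> expr -> ctx
| CLet2   : Hd -> list Var -> expr -> ctx -> ctx
| CCall   : Hd -> Proc -> list expr -> ctx -> list expr -> ctx
| CPrim   : Hd -> Prim -> list expr -> ctx -> list expr -> ctx
| CIf1    : Hd -> ctx -> list Val -> expr -> expr -> ctx
| CIf2    : Hd -> expr -> list Val -> ctx -> expr -> ctx
| CIf3    : Hd -> expr -> list Val -> expr -> ctx -> ctx
| CFork   : Hd -> Proc -> list expr -> ctx -> list expr -> ctx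
| CJoin   : Hd -> ctx -> ctx
| CBundle : Hd -> list expr -> ctx -> list expr -> ctx.

Fixpoint plug (C : ctx) (e : expr) : expr :=
  match C with
  | CHole => e
  | CLet1 h xs C' e2 => ELet h xs (plug C' e) e2
  | CLet2 h xs e1 C' => ELet h xs e1 (plug C' e)
  | CCall h f l C' r => ECall h f (l ++ plug C' e :: r)
  | CPrim h p l C' r => EPrim h p (l ++ plug C' e :: r)
  | CIf1 h C' cs e2 e3 => EIf h (plug C' e) cs e2 e3
  | CIf2 h e1 cs C' e3 => EIf h e1 cs (plug C' e) e3
  | CIf3 h e1 cs e2 C' => EIf h e1 cs e2 (plug C' e)
  | CFork h f l C' r => EFork h f (l ++ plug C' e :: r)
  | CJoin h C' => EJoin h (plug C' e)
  | CBundle h l C' r => EBundle h (l ++ plug C' e :: r)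
  end.

(* Resynthesization r(S E) = E', as a relation: the primed handles h' are
   arbitrary (the choice of handles is immaterial), and the number n of
   arguments consumed by call/primitive/bundle/fork is arbitrary.
   Sequences are top-first: a stack  a_n ... a_1 . E  is  rev args ++ E
   where args = [a_1; ...; a_n]. *)
Inductive resyn : stack -> list expr -> list expr -> Prop :=
| r_nil E : resyn [] E E
| r_expr e rho S E E' :
    resyn S (e :: E) E' -> resyn ((HExpr e, rho) :: S) E E'
| r_let h h' xs e2 rho S a E E' :
    resyn ((HExpr (ELet h' xs a e2), rho) :: S) E E' ->
    resyn ((HLet h xs e2, rho) :: S) (a :: E) E'
| r_call h h' f rho S args E E' :
    resyn ((HExpr (ECall h' f args), rho) :: S) E E' ->
    resyn ((HCall h f, rho) :: S) (rev args ++ E) E'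
| r_prim h h' p rho S args E E' :
    resyn ((HExpr (EPrim h' p args), rho) :: S) E E' ->
    resyn ((HPrim h p, rho) :: S) (rev args ++ E) E'
| r_if h h' cs e2 e3 rho S a E E' :
    resyn ((HExpr (EIf h' a cs e2 e3), rho) :: S) E E' ->
    resyn ((HIf h cs e2 e3, rho) :: S) (a :: E) E'
| r_bundle h h' rho S args E E' :
    resyn ((HExpr (EBundle h' args), rho) :: S) E E' ->
    resyn ((HBundle h, rho) :: S) (rev args ++ E) E'
| r_fork h h' f rho S args E E' :
    resyn ((HExpr (EFork h' f args), rho) :: S) E E' ->
    resyn ((HFork h f, rho) :: S) (rev args ++ E) E'
| r_join h h' rho S a E E' :
    resyn ((HExpr (EJoin h' a), rho) :: S) E E' ->
    resyn ((HJoin h, rho) :: S) (a :: E) E'.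

End Syntax.

(* Every step of resynthesization either moves an expression from the stack
   to the sequence or plugs expressions of the sequence into a larger one;
   nothing is discarded.  So "some expression on the stack or in the sequence
   has e as a subexpression" is invariant, and at the end the stack is empty. *)
From Stdlib Require Import List Permutation.
Import ListNotations.

Lemma Exists_wrap {A : Type} {P : A -> Prop} (args : list A) {w : A} {L E : list A} :
  (Exists P args -> P w) -> Exists P (L ++ args ++ E) -> Exists P (w :: L ++ E).
Proof.
  intros Hw HL. apply Exists_app in HL as [HL | HL].
  - right. apply Exists_app. now left.
  - apply Exists_app in HL as [HL | HL].
    + left. exact (Hw HL).
    + right. apply Exists_app. now right.
Qed.

Set Implicit Arguments.

Section Resynthesization.
Context (Hd Var Val Proc Prim Env : Type).
Notation expr := (expr Hd Var Val Proc Prim).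
Notation ctx := (ctx Hd Var Val Proc Prim).
Notation stack := (stack Hd Var Val Proc Prim Env).
Variable e : expr.

Definition contains (x : expr) : Prop := exists C : ctx, x = plug C e.

Lemma Exists_contains_iff (l : list expr) :
  Exists contains l <-> exists (l1 l2 : list expr) (C : ctx), l = l1 ++ plug C e :: l2.
Proof.
  rewrite Exists_exists. split.
  - intros (x & Hx & C & ->). destruct (in_split _ _ Hx) as (l1 & l2 & ->). eauto.
  - intros (l1 & l2 & C & ->). exists (plug C e).
    split; [apply in_or_app; right; left; reflexivity | now exists C].
Qed.

Lemma contains_args (mk : list expr -> expr)
  (Hmk : forall (l r : list expr) (C : ctx), contains (mk (l ++ plug C e :: r)))
  (args : list expr) : Exists contains (rev args) -> contains (mk args).
Proof.
  intro Hargs. apply Exists_rev in Hargs. rewrite rev_involutive in Hargs.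
  apply Exists_contains_iff in Hargs as (l & r & C & ->). apply Hmk.
Qed.

Lemma contains_arg (mk : expr -> expr)
  (Hmk : forall C : ctx, contains (mk (plug C e))) (a : expr) :
  Exists contains [a] -> contains (mk a).
Proof.
  intro Ha. inversion Ha as [? ? [C ->] | ? ? Hnil]; [apply Hmk | inversion Hnil].
Qed.

Fixpoint stack_exprs (S : stack) : list expr :=
  match S with
  | [] => []
  | (HExpr x, _) :: S' => x :: stack_exprs S'
  | _ :: S' => stack_exprs S'
  end.

Lemma resyn_preserves_contains (S : stack) (E E' : list expr) :
  resyn S E E' -> Exists contains (stack_exprs S ++ E) -> Exists contains E'.
Proof.
  induction 1 as [E | x rho S E E' _ IH | h h' xs e2 rho S a E E' _ IH
    | h h' f rho S args E E' _ IH | h h' p rho S args E E' _ IH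
    | h h' cs e2 e3 rho S a E E' _ IH | h h' rho S args E E' _ IH
    | h h' f rho S args E E' _ IH | h h' rho S a E E' _ IH];
    simpl; intro Hinv; [exact Hinv | apply IH ..]; simpl.
  - eapply Permutation_Exists; [apply Permutation_middle | exact Hinv].
  - apply (Exists_wrap [a]); [| exact Hinv].
    apply (contains_arg (fun b => ELet h' xs b e2)).
    intro C. now exists (CLet1 h' xs C e2).
  - apply (Exists_wrap (rev args)); [| exact Hinv].
    apply (contains_args (ECall h' f)).
    intros l r C. now exists (CCall h' f l C r).
  - apply (Exists_wrap (rev args)); [| exact Hinv].
    apply (contains_args (EPrim h' p)).
    intros l r C. now exists (CPrim h' p l C r).
  - apply (Exists_wrap [a]); [| exact Hinv].
    apply (contains_arg (fun b => EIf h' b cs e2 e3)).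
    intro C. now exists (CIf1 h' C cs e2 e3).
  - apply (Exists_wrap (rev args)); [| exact Hinv].
    apply (contains_args (EBundle h')).
    intros l r C. now exists (CBundle h' l C r).
  - apply (Exists_wrap (rev args)); [| exact Hinv].
    apply (contains_args (EFork h' f)).
    intros l r C. now exists (CFork h' f l C r).
  - apply (Exists_wrap [a]); [| exact Hinv].
    apply (contains_arg (EJoin h')).
    intro C. now exists (CJoin h' C).
Qed.

End Resynthesization.

Theorem mainTheorem4 (Hd Var Val Proc Prim Env : Type)
  (S : stack Hd Var Val Proc Prim Env) (e : expr Hd Var Val Proc Prim)
  (C : ctx Hd Var Val Proc Prim) (E1 E2 E' : list (expr Hd Var Val Proc Prim)) :
  resyn S (E1 ++ plug C e :: E2) E' ->
  exists (E1' E2' : list (expr Hd Var Val Proc Prim)) (C' : ctx Hd Var Val Proc Prim),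
    E' = E1' ++ plug C' e :: E2'.
Proof.
  intro Hresyn. apply Exists_contains_iff.
  apply (resyn_preserves_contains Hresyn).
  apply Exists_app. right. apply Exists_contains_iff. eauto.
Qed.
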